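(* Let $G$ be a simple graph and let $k \geq 1$ be an integer. Then $G$ has a non-empty $k$-core if and only if $\rho_k(G) \geq 1$.
   Context: All graphs are finite, simple and undirected. The $k$-core of a graph $G$ is the maximal subgraph of $G$ in which every vertex has degree at least $k$ within the subgraph (it may be empty; ''$G$ has a $k$-core'' means it is non-empty, i.e. $G$ has a subgraph of minimum degree at least $k$). For a tensor $\mathcal{A}=(a_{i_1 i_2\cdots i_m})$ of order $m$ and dimension $n$ and $\mathbf{x}\in\mathbb{C}^n$, $\mathcal{A}\mathbf{x}^{m-1}\in\mathbb{C}^n$ has $i$-th component $\sum_{i_2,\ldots,i_m=1}^n a_{i i_2\cdots i_m}x_{i_2}\cdots x_{i_m}$. A complex number $\lambda$ is an eigenvalue of $\mathcal{A}$ if there is a nonzero $\mathbf{x}\in\mathbb{C}^n$ with $\mathcal{A}\mathbf{x}^{m-1}=\lambda\mathbf{x}^{[m-1]}$, where $\mathbf{x}^{[m-1]}=(x_1^{m-1},\ldots,x_n^{m-1})^{\mathrm T}$; $\mathbf{x}$ is then an eigenvector. The spectral radius $\rho(\mathcal{A})$ is the largest modulus of the eigenvalues of $\mathcal{A}$. For a graph $G$ on vertex set $\{1,\ldots,n\}$ with neighborhoods $N_G(i)$, the $k$-adjacency tensor $\mathcal{A}^{(k)}(G)=(a_{i_1 i_2\cdots i_{k+1}})$ is the order-$(k+1)$, dimension-$n$ tensor with $a_{i_1 i_2\cdots i_{k+1}}=1/k!$ if $i_1,\ldots,i_{k+1}$ are pairwise distinct and $\{i_2,\ldots,i_{k+1}\}\subseteq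 N_G(i_1)$, and $0$ otherwise. Equivalently, $(\mathcal{A}^{(k)}(G)\mathbf{x}^k)_i=\sum_{T\subseteq N_G(i),\,|T|=k}\prod_{j\in T}x_j$. Define $\rho_k(G)=\rho(\mathcal{A}^{(k)}(G))$. (For $k=1$ this is the adjacency matrix and its spectral radius.) *)

From HB Require Import structures.
From mathcomp Require Import all_boot all_order all_algebra.
From mathcomp Require Import complex.
From mathcomp Require Import boolp classical_sets reals.
Set Implicit Arguments. Unset Strict Implicit. Unset Printing Implicit Defensive.
Import Order.TTheory GRing.Theory Num.Theory.
Local Open Scope ring_scope.
Local Open Scope classical_set_scope.

Definition simple_graph (V : finType) (adj : rel V) : Prop :=
  symmetric adj /\ irreflexive adj.

Definition nbhd (V : finType) (adj : rel V) (i : V) : {set V} := [set j | adj i j].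

Definition has_kcore (V : finType) (adj : rel V) (k : nat) : Prop :=
  exists S : {set V}, (S != finset.set0) /\
    forall i, i \in S -> (k <= #|nbhd adj i :&: S|)%N.

(* Entry a_{i, f 0, ..., f (k-1)} of the k-adjacency tensor A^(k)(G),
   an order-(k+1) tensor indexed by V; f : 'I_k -> V lists i_2..i_{k+1}. *)
Definition kadj_entry (R : rcfType) (V : finType) (adj : rel V) (k : nat)
    (i : V) (f : {ffun 'I_k -> V}) : R[i] :=
  if [&& injectiveb f, i \notin codom f & [forall j, adj i (f j)]]
  then (k`!%:R)^-1 else 0.

Definition kadj_apply (R : rcfType) (V : finType) (adj : rel V) (k : nat)
    (x : V -> R[i]) (i : V) : R[i] :=
  \sum_(f : {ffun 'I_k -> V}) @kadj_entry R V adj k i f * \prod_(j < k) x (f j).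

Definition kadj_eigenvalue (R : rcfType) (V : finType) (adj : rel V) (k : nat)
    (l : R[i]) : Prop :=
  exists x : V -> R[i], (exists i, x i != 0) /\
    forall i, kadj_apply adj k x i = l * x i ^+ k.

Definition rho_k (R : realType) (V : finType) (adj : rel V) (k : nat) : R :=
  sup [set Num.sqrt (complex.Re l ^+ 2 + complex.Im l ^+ 2) | l in @kadj_eigenvalue R V adj k].

From HB Require Import structures.
From mathcomp Require Import all_boot all_order all_algebra.
From mathcomp Require Import complex.
From mathcomp Require Import boolp classical_sets reals.
From mathcomp Require Import ring lra.
From mathcomp Require Import fingroup perm.
Set Implicit Arguments. Unset Strict Implicit. Unset Printing Implicit Defensive.
Import Order.TTheory GRing.Theory Num.Theory.
Local Open Scope ring_scope.

(** If l <> 0 is an eigenvalue with eigenvector x, then at every vertex i of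
   the support of x the sum (A x^k)_i = l x_i^k is nonzero, so some k distinct
   neighbours of i lie in the support: the support is a k-core.

   Conversely the indicator x of a k-core satisfies x^[k] <= A x^k, since every
   vertex of the core sees at least k! ordered k-tuples of neighbours in the
   core, each of weight 1/k!.  A Perron-Frobenius argument for the monotone, degree-k
   homogeneous map x |-> A x^k then yields a nonnegative eigenvector with
   eigenvalue >= 1.  Let mu* be the supremum of the mu admitting a nonzero
   x >= 0 with mu x^[k] <= A x^k.  It is attained: the sub-eigenvectors with
   entries in [0, 1] have a pointwise largest element, which decreases in mu,
   and its limit as mu increases to mu* is a nonzero sub-eigenvector for mu*.
   Among the nonzero sub-eigenvectors for mu*, one whose set of strict
   coordinates is largest is an eigenvector: otherwise raising a single
   coordinate slightly enlarges that set, or cutting the vector down to it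
   beats mu*. *)

Lemma no_strict_ascent (T : Type) (P : T -> Prop) (m : T -> nat) (b : nat) :
  (forall x, P x -> (m x <= b)%N) ->
  (forall x, P x -> exists2 y, P y & (m x < m y)%N) -> forall x, ~ P x.
Proof.
move=> bounded ascent x Px.
have high n : exists2 y, P y & (n <= m y)%N.
  elim: n => [|n [y Py le_ny]]; first by exists x.
  by have [z Pz lt_yz] := ascent y Py; exists z => //; apply: leq_ltn_trans lt_yz.
by have [y Py] := high b.+1; rewrite ltnNge bounded.
Qed.

Lemma card_ltn_setU1 (T : finType) (a : T) (A B : {set T}) :
  a \notin A -> a |: A \subset B -> (#|A| < #|B|)%N.
Proof. by move=> aA /subset_leq_card; rewrite cardsU1 aA add1n. Qed.

Section RealField.
Variable R : realFieldType.

Lemma prodr_sub_le (n : nat) (a b : 'I_n -> R) (M e : R) :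
  1 <= M -> 0 <= e ->
  (forall j, [/\ 0 <= a j, a j <= b j, b j <= M & b j - a j <= e]) ->
  \prod_(j < n) b j - \prod_(j < n) a j <= n%:R * M ^+ n * e.
Proof.
move=> M_ge1 e_ge0; elim: n a b => [|n IH] a b ab; first by rewrite !big_ord0 subrr !mul0r.
rewrite !big_ord_recr /=.
set B := \prod_(i < n) _; set A := \prod_(i < n) _.
have [a_ge0 le_ab b_leM ab_e] := ab ord_max.
have IHab : B - A <= n%:R * M ^+ n * e := IH _ _ (fun j => ab _).
have A_ge0 : 0 <= A by apply: prodr_ge0 => i _; case: (ab (widen_ord _ i)).
have le_AB : A <= B by apply: ler_prod => i _; case: (ab (widen_ord _ i)) => *; apply/andP.
have B_leM : B <= M ^+ n.
  rewrite -[n in M ^+ n]card_ord -prodr_const; apply: ler_prod => i _.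
  by case: (ab (widen_ord _ i)) => *; apply/andP; split; lra.
have Mn_ge1 : 1 <= M ^+ n by apply: exprn_ege1.
have -> : B * b ord_max - A * a ord_max = B * (b ord_max - a ord_max) + (B - A) * a ord_max.
  by ring.
have le_Bb : B * (b ord_max - a ord_max) <= M ^+ n * e by apply: ler_pM; lra.
have le_BAa : (B - A) * a ord_max <= (n%:R * M ^+ n * e) * M by apply: ler_pM; lra.
have n_ge0 : 0 <= (n%:R : R) by apply: ler0n.
have Mne_ge0 : 0 <= M ^+ n * e by apply: mulr_ge0; lra.
have le_MneM : M ^+ n * e <= M ^+ n * e * M by rewrite -{1}[M ^+ n * e]mulr1; apply: ler_pM; lra.
have -> : n.+1%:R * M ^+ n.+1 * e = (n%:R * M ^+ n * e) * M + M ^+ n * e * M.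
  by rewrite exprSr -addn1 natrD; ring.
lra.
Qed.

Lemma subrXX_le (n : nat) (a b M e : R) : 1 <= M -> 0 <= e ->
  0 <= a -> a <= b -> b <= M -> b - a <= e -> b ^+ n - a ^+ n <= n%:R * M ^+ n * e.
Proof.
move=> M_ge1 e_ge0 a_ge0 le_ab b_leM ab_e.
have := @prodr_sub_le n (fun _ => a) (fun _ => b) M e M_ge1 e_ge0.
by rewrite !prodr_const card_ord; apply.
Qed.

Lemma exists_small_increment (mu a b : R) (k : nat) :
  0 <= mu -> 0 <= a -> mu * a ^+ k < b -> exists2 t, 0 < t & mu * (a + t) ^+ k < b.
Proof.
move=> mu_ge0 a_ge0 lt_b.
pose K := k%:R * (a + 1) ^+ k.
have K_ge0 : 0 <= K by apply: mulr_ge0; [exact: ler0n | apply: exprn_ge0; lra].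
pose C := mu * K + 1; pose g := b - mu * a ^+ k.
have C_gt0 : 0 < C by rewrite /C; have := mulr_ge0 mu_ge0 K_ge0; lra.
have g_gt0 : 0 < g by rewrite /g subr_gt0.
pose t := Num.min 1 (g / C).
have t_gt0 : 0 < t by rewrite lt_min ltr01 divr_gt0.
have t_le1 : t <= 1 by rewrite ge_min lexx.
have tC : t * C <= g by rewrite -ler_pdivlMr // ge_min lexx orbT.
exists t => //.
have incr : (a + t) ^+ k - a ^+ k <= K * t by apply: subrXX_le; lra.
have : mu * ((a + t) ^+ k - a ^+ k) <= mu * (K * t) by apply: ler_wpM2l.
rewrite /g /C in tC; nra.
Qed.

Lemma exists_uniform_delta (T : finType) (Q : T -> R -> Prop) :
  (forall i, exists2 d, 0 < d & forall e, 0 < e -> e <= d -> Q i e) ->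
  exists2 d, 0 < d & forall i, Q i d.
Proof.
move=> delta.
suff [d d_gt0 Qd] : exists2 d, 0 < d & forall e, 0 < e -> e <= d ->
    forall i, i \in enum T -> Q i e.
  by exists d => // i; apply: Qd; rewrite ?mem_enum.
elim: (enum T) => [|a s [d1 d1_gt0 Q1]]; first by exists 1.
have [d2 d2_gt0 Q2] := delta a.
exists (Num.min d1 d2); first by rewrite lt_min d1_gt0 d2_gt0.
move=> e e_gt0; rewrite le_min => /andP [ed1 ed2] i; rewrite in_cons => /orP [/eqP -> | i_s].
  exact: Q2.
exact: Q1.
Qed.

Lemma ler_sum_injective (I J : finType) (g : I -> J) (P : pred J) (F : J -> R) :
  injective g -> (forall i, P (g i)) -> (forall j, 0 <= F j) ->
  \sum_i F (g i) <= \sum_(j | P j) F j.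
Proof.
move=> g_inj Pg F_ge0.
rewrite -(big_imset _ (in2W g_inj)) /= [X in _ <= X]big_mkcond [X in X <= _]big_mkcond.
apply: ler_sum => j _; case: ifP => [/imsetP [i _ ->]|_]; first by rewrite Pg.
by case: ifP.
Qed.

End RealField.

Section KAdjacencySum.
Variables (R : realFieldType) (V : finType) (adj : rel V) (k : nat).
Hypothesis adj_sym : symmetric adj.
Hypothesis adj_irr : irreflexive adj.
Hypothesis k_gt0 : (0 < k)%N.

Definition kneighbours (i : V) (f : {ffun 'I_k -> V}) : bool :=
  [&& injectiveb f, i \notin codom f & [forall j, adj i (f j)]].

(* k! times (A^(k)(G) x^k)_i, for real x *)
Definition kadj_sum (x : V -> R) (i : V) : R :=
  \sum_(f | kneighbours i f) \prod_(j < k) x (f j).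

Local Notation N := (#|{ffun 'I_k -> V}|%:R : R).

Lemma kneighbours_neq i f j : kneighbours i f -> f j != i.
Proof. by case/and3P => _ i_f _; apply: contraNneq i_f => <-; rewrite codom_f. Qed.

Lemma kneighbours_adj i f j : kneighbours i f -> adj i (f j).
Proof. by case/and3P => _ _ /forallP. Qed.

Lemma kadj_sum_ge0 x i : (forall j, 0 <= x j) -> 0 <= kadj_sum x i.
Proof. by move=> x_ge0; apply: sumr_ge0 => f _; apply: prodr_ge0. Qed.

Lemma ler_kadj_sum x y i : (forall j, 0 <= x j <= y j) -> kadj_sum x i <= kadj_sum y i.
Proof. by move=> le_xy; apply: ler_sum => f _; apply: ler_prod => j _. Qed.

Lemma kadj_sumZ c x i : kadj_sum (fun j => c * x j) i = c ^+ k * kadj_sum x i.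
Proof.
rewrite /kadj_sum mulr_sumr; apply: eq_bigr => f _.
by rewrite big_split /= prodr_const card_ord.
Qed.

Lemma eq_kadj_sum x y i : (forall j, j != i -> x j = y j) -> kadj_sum x i = kadj_sum y i.
Proof.
move=> eq_xy; apply: eq_bigr => f f_i; apply: eq_bigr => j _.
by apply: eq_xy; apply: kneighbours_neq.
Qed.

Lemma sum_kneighbours_le (F : {ffun 'I_k -> V} -> R) i c :
  0 <= c -> (forall f, kneighbours i f -> F f <= c) ->
  \sum_(f | kneighbours i f) F f <= N * c.
Proof.
move=> c_ge0 F_le; rewrite big_mkcond /=.
apply: le_trans (_ : \sum_(f : {ffun 'I_k -> V}) c <= _).
  by apply: ler_sum => f _; case: ifP => // /F_le.
by rewrite sumr_const mulr_natl.
Qed.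

Lemma kadj_sum_le x i m : 0 <= m -> (forall j, 0 <= x j <= m) -> kadj_sum x i <= N * m ^+ k.
Proof.
move=> m_ge0 x_le; apply: sum_kneighbours_le; first exact: exprn_ge0.
by move=> f _; rewrite -[k in m ^+ k]card_ord -prodr_const; apply: ler_prod.
Qed.

Lemma kadj_sum_sub_le x y i e : 0 <= e ->
  (forall j, [/\ 0 <= x j, x j <= y j, y j <= 1 & y j - x j <= e]) ->
  kadj_sum y i - kadj_sum x i <= N * (k%:R * e).
Proof.
move=> e_ge0 xy; rewrite -sumrB; apply: sum_kneighbours_le.
  by apply: mulr_ge0 => //; apply: ler0n.
move=> f _; have := prodr_sub_le (lexx 1) e_ge0 (fun j => xy (f j)).
by rewrite expr1n mulr1.
Qed.

Lemma exists_kneighbours_pos x i : (forall j, 0 <= x j) -> 0 < kadj_sum x i ->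
  exists2 f, kneighbours i f & forall m, 0 < x (f m).
Proof.
move=> x_ge0 A_gt0; apply: contrapT => no_f.
suff A0 : kadj_sum x i = 0 by move: A_gt0; rewrite A0 ltxx.
apply: big1 => f f_i; apply/eqP/prodf_eq0.
have /existsNP [m /negP] : ~ forall m, 0 < x (f m) by move=> pos; apply: no_f; exists f.
by rewrite lt_neqAle x_ge0 andbT negbK eq_sym => x0; exists m.
Qed.

Lemma kneighbours_through x i j : (forall m, 0 <= x m) -> 0 < kadj_sum x i ->
  adj i j -> 0 < x j ->
  exists f m0, [/\ kneighbours i f, f m0 = j & forall m, 0 < x (f m)].
Proof.
move=> x_ge0 A_gt0 aij xj_gt0; have [f f_i f_pos] := exists_kneighbours_pos x_ge0 A_gt0.
have [/codomP [m0 ->]|j_f] := boolP (j \in codom f); first by exists f, m0.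
pose o : 'I_k := Ordinal k_gt0.
pose f' := [ffun m => if m == o then j else f m].
have [f_inj i_f adj_f] := and3P f_i.
exists f', o; split; last 2 first.
- by rewrite ffunE eqxx.
- by move=> m; rewrite ffunE; case: (m =P o).
apply/and3P; split.
- apply/injectiveP => m1 m2; rewrite !ffunE.
  case: (m1 =P o) => [->|_]; case: (m2 =P o) => [->|_] //.
  + by move=> e; move: j_f; rewrite e codom_f.
  + by move=> e; move: j_f; rewrite -e codom_f.
  + exact: (injectiveP _ f_inj).
- apply/codomP => [[m]]; rewrite ffunE; case: (m =P o) => _ e.
    by move: aij; rewrite -e adj_irr.
  by move: i_f; rewrite e codom_f.
- by apply/forallP => m; rewrite ffunE; case: (m =P o) => _ //; exact: (forallP adj_f).
Qed.

Definition nonzero (x : V -> R) : Prop := exists i, x i != 0.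

Definition subeigen (mu : R) (x : V -> R) : Prop :=
  forall i, 0 <= x i /\ mu * x i ^+ k <= kadj_sum x i.

Definition strict_set (mu : R) (x : V -> R) : {set V} :=
  [set i | (x i != 0) && (mu * x i ^+ k < kadj_sum x i)].

Definition raise (x : V -> R) (j : V) (t : R) : V -> R :=
  fun m => if m == j then x j + t else x m.

Lemma expr0k : (0 : R) ^+ k = 0.
Proof. by rewrite expr0n eqn0Ngt k_gt0. Qed.

Lemma subeigen0 mu : subeigen mu (fun _ => 0).
Proof. by move=> i; rewrite expr0k mulr0 kadj_sum_ge0. Qed.

Lemma subeigen_ge0 mu x : subeigen mu x -> forall i, 0 <= x i.
Proof. by move=> sx i; case: (sx i). Qed.

Lemma raise_ge x j t m : 0 <= x m -> 0 <= t -> 0 <= x m <= raise x j t m.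
Proof. by move=> xm_ge0 t_ge0; rewrite /raise xm_ge0; case: eqP => [->|]; lra. Qed.

Lemma raise_id x j t m : m != j -> raise x j t m = x m.
Proof. by rewrite /raise => /negbTE ->. Qed.

Lemma kadj_sum_raise x j t : kadj_sum (raise x j t) j = kadj_sum x j.
Proof. by apply: eq_kadj_sum => m; apply: raise_id. Qed.

Section Raise.
Variables (mu : R) (x : V -> R) (j : V) (t : R).
Hypotheses (sx : subeigen mu x) (t_gt0 : 0 < t).
Hypothesis raise_sub : mu * (x j + t) ^+ k < kadj_sum x j.

Let le_x_raise m : 0 <= x m <= raise x j t m.
Proof. by apply: raise_ge; [case: (sx m) | exact: ltW]. Qed.

Lemma subeigen_raise : subeigen mu (raise x j t).
Proof.
move=> m; split; first by case/andP: (le_x_raise m) => x_ge0; apply: le_trans.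
have [->|mj] := eqVneq m j; first by rewrite kadj_sum_raise /raise eqxx ltW.
by rewrite raise_id //; case: (sx m) => _ /le_trans; apply; apply: ler_kadj_sum.
Qed.

Lemma strict_set_raise : j |: strict_set mu x \subset strict_set mu (raise x j t).
Proof.
apply/fintype.subsetP => m; rewrite !inE.
have [-> _|mj /= /andP [xm lt_m]] := eqVneq m j.
  rewrite kadj_sum_raise /raise eqxx raise_sub andbT lt0r_neq0 //.
  by case: (sx j) => xj_ge0 _; apply: ltr_wpDl.
rewrite raise_id // xm /=; apply: lt_le_trans lt_m _.
exact: ler_kadj_sum le_x_raise.
Qed.

End Raise.

Lemma kadj_sum_raise_lt x i j t : (forall m, 0 <= x m) -> 0 < kadj_sum x i ->
  adj i j -> 0 < x j -> 0 < t -> kadj_sum x i < kadj_sum (raise x j t) i.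
Proof.
move=> x_ge0 A_gt0 aij xj_gt0 t_gt0.
have [f [m0 [f_i fm0 f_pos]]] := kneighbours_through x_ge0 A_gt0 aij xj_gt0.
have le_xy m : 0 <= x m <= raise x j t m by apply: raise_ge; [exact: x_ge0 | exact: ltW].
rewrite -subr_gt0 -sumrB (bigD1 f) //=.
have rest_ge0 : 0 <= \sum_(g | kneighbours i g && (g != f))
    (\prod_(m < k) raise x j t (g m) - \prod_(m < k) x (g m)).
  by apply: sumr_ge0 => g _; rewrite subr_ge0; apply: ler_prod => m _.
suff : 0 < \prod_(m < k) raise x j t (f m) - \prod_(m < k) x (f m) by lra.
rewrite (bigD1 m0) //= (bigD1 m0 (F := fun m => x (f m))) //= fm0 /raise eqxx.
set Py := \prod_(m | m != m0) _; set Px := \prod_(m | m != m0) _.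
have Px_gt0 : 0 < Px by apply: prodr_gt0 => m _.
have le_PxPy : Px <= Py by apply: ler_prod => m _; exact: le_xy.
nra.
Qed.

Lemma strict_set_ascend_zero mu x i : 0 <= mu -> subeigen mu x ->
  x i = 0 -> 0 < kadj_sum x i ->
  exists2 y, subeigen mu y /\ nonzero y & (#|strict_set mu x| < #|strict_set mu y|)%N.
Proof.
move=> mu_ge0 sx xi0 A_gt0.
have xi_ge0 : 0 <= x i by rewrite xi0.
have lt_i : mu * x i ^+ k < kadj_sum x i by rewrite xi0 expr0k mulr0.
have [t t_gt0 lt_t] := exists_small_increment mu_ge0 xi_ge0 lt_i.
exists (raise x i t).
  by split; [exact: subeigen_raise | exists i; rewrite /raise eqxx xi0 add0r gt_eqF].
apply: card_ltn_setU1 (strict_set_raise sx t_gt0 lt_t).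
by rewrite inE xi0 eqxx.
Qed.

Lemma strict_set_ascend_neighbour mu x i j : 0 < mu -> subeigen mu x ->
  j \in strict_set mu x -> x i != 0 -> i \notin strict_set mu x -> adj i j ->
  exists2 y, subeigen mu y /\ nonzero y & (#|strict_set mu x| < #|strict_set mu y|)%N.
Proof.
move=> mu_gt0 sx jD xi iD aij.
have x_ge0 := subeigen_ge0 sx.
have ij : i != j by apply: contraTneq aij => ->; rewrite adj_irr.
have /andP [xj lt_j] : (x j != 0) && (mu * x j ^+ k < kadj_sum x j) by rewrite inE in jD.
have xj_gt0 : 0 < x j by rewrite lt0r xj x_ge0.
have [t t_gt0 lt_t] := exists_small_increment (ltW mu_gt0) (x_ge0 j) lt_j.
have Ai_gt0 : 0 < kadj_sum x i.
  case: (sx i) => _; apply: lt_le_trans; rewrite mulr_gt0 // exprn_gt0 //.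
  by rewrite lt0r xi x_ge0.
have lt_Ai := kadj_sum_raise_lt x_ge0 Ai_gt0 aij xj_gt0 t_gt0.
exists (raise x j t).
  by split; [exact: subeigen_raise | exists i; rewrite raise_id].
apply: card_ltn_setU1 iD _; rewrite finset.subUset finset.sub1set.
rewrite (fintype.subset_trans _ (strict_set_raise sx t_gt0 lt_t)) ?finset.subsetUr ?andbT //.
by rewrite inE raise_id // xi /=; apply: le_lt_trans lt_Ai; case: (sx i).
Qed.

Lemma eigen_of_strict_set0 mu x : subeigen mu x -> strict_set mu x = finset.set0 ->
  (forall i, x i = 0 -> kadj_sum x i <= 0) -> forall i, kadj_sum x i = mu * x i ^+ k.
Proof.
move=> sx D0 x0_A i; case: (sx i) => _ le_i; apply/eqP; rewrite eq_le le_i andbT.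
have [xi0|xi] := eqVneq (x i) 0; first by rewrite xi0 expr0k mulr0 x0_A.
have : i \notin strict_set mu x by rewrite D0 inE.
by rewrite inE xi /= -leNgt.
Qed.

(* If mass never flows into the strict set from outside it, cutting x down to
   the strict set keeps every strict inequality and so gains some d > 0. *)
Lemma subeigen_restrict mu x : subeigen mu x ->
  (forall i j, j \in strict_set mu x -> x i != 0 -> adj i j -> i \in strict_set mu x) ->
  exists2 d, 0 < d & subeigen (mu + d) (fun m => if m \in strict_set mu x then x m else 0).
Proof.
move=> sx closedD; set D := strict_set mu x; pose y m := if m \in D then x m else 0.
have x_ge0 := subeigen_ge0 sx.
have y_ge0 m : 0 <= y m by rewrite /y; case: ifP.
have Ay i : i \in D -> kadj_sum y i = kadj_sum x i.
  move=> iD; apply: eq_bigr => f f_i; apply: eq_bigr => m _; rewrite /y.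
  case: ifP => // fmD; have [-> //|xfm] := eqVneq (x (f m)) 0.
  move/negbT: fmD => /negP []; apply: closedD iD xfm _.
  by rewrite adj_sym; exact: kneighbours_adj f_i.
have [d d_gt0 Dd] : exists2 d, 0 < d &
    forall m, m \in D -> (mu + d) * x m ^+ k <= kadj_sum x m.
  apply: exists_uniform_delta => m.
  have [mD|mD] := boolP (m \in D); last by exists 1 => // e _ _ /(negP mD).
  move: (mD); rewrite inE => /andP [xm lt_m].
  have xk_gt0 : 0 < x m ^+ k by rewrite exprn_gt0 // lt0r xm x_ge0.
  exists ((kadj_sum x m - mu * x m ^+ k) / x m ^+ k); first by rewrite divr_gt0 // subr_gt0.
  by move=> e e_gt0; rewrite ler_pdivlMr // => le_e _; lra.
exists d => // m; split; first exact: y_ge0.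
have [mD|mD] := boolP (m \in D); first by rewrite Ay //=; apply: Dd.
by rewrite expr0k mulr0 kadj_sum_ge0.
Qed.

Lemma eigen_of_maximal mu : 0 < mu -> (exists x, subeigen mu x /\ nonzero x) ->
  (forall mu' x, mu < mu' -> subeigen mu' x -> ~ nonzero x) ->
  exists x, nonzero x /\ forall i, kadj_sum x i = mu * x i ^+ k.
Proof.
move=> mu_gt0 [x0 sx0] maximal; apply: contrapT => no_eigen.
apply: (@no_strict_ascent _ (fun x => subeigen mu x /\ nonzero x)
  (fun x => #|strict_set mu x|) #|V| _ _ x0 sx0) => [x _|x [sx nzx]]; first exact: max_card.
have [[i [xi0 Ai]]|no_zero_gain] := pselect (exists i, x i = 0 /\ 0 < kadj_sum x i).
  exact: strict_set_ascend_zero (ltW mu_gt0) sx xi0 Ai.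
have [[i [j [jD xi iD aij]]]|no_neighbour_gain] := pselect (exists i j,
    [/\ j \in strict_set mu x, x i != 0, i \notin strict_set mu x & adj i j]).
  exact: strict_set_ascend_neighbour mu_gt0 sx jD xi iD aij.
exfalso; have [D0|[i0 i0D]] := set_0Vmem (strict_set mu x).
  apply: no_eigen; exists x; split => //; apply: eigen_of_strict_set0 => // i xi0.
  by rewrite leNgt; apply/negP => Ai; apply: no_zero_gain; exists i.
have [|d d_gt0 sy] := subeigen_restrict sx.
  move=> i j jD xi aij; apply: contrapT => /negP iD.
  by apply: no_neighbour_gain; exists i, j.
apply: maximal (mu + d) _ _ sy _; first by rewrite ltrDl.
by exists i0; rewrite i0D; move: i0D; rewrite inE => /andP [].
Qed.

Lemma subeigen_le_card mu x : subeigen mu x -> nonzero x -> mu <= N.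
Proof.
move=> sx [i1 xi1]; have x_ge0 := subeigen_ge0 sx.
have [j _ max_j] := @arg_maxP _ R V i1 xpredT x isT.
have xj_gt0 : 0 < x j by apply: lt_le_trans (max_j i1 isT); rewrite lt0r xi1 x_ge0.
have xjk_gt0 : 0 < x j ^+ k by apply: exprn_gt0.
have A_le := kadj_sum_le j (ltW xj_gt0) (fun m => introT andP (conj (x_ge0 m) (max_j m isT))).
by case: (sx j) => _ le_A; rewrite -(ler_pM2r xjk_gt0); apply: le_trans le_A A_le.
Qed.

Lemma kcore_subeigen (S : {set V}) :
  (forall i, i \in S -> (k <= #|nbhd adj i :&: S|)%N) ->
  subeigen k`!%:R (fun i => if i \in S then 1 else 0).
Proof.
move=> S_core i; pose x i : R := if i \in S then 1 else 0.
have x_ge0 m : 0 <= x m by rewrite /x; case: ifP.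
split; first exact: x_ge0.
have [iS|iNS] := boolP (i \in S); last first.
  by rewrite expr0k mulr0 kadj_sum_ge0.
rewrite expr1n mulr1; set W := nbhd adj i :&: S.
have W_k : (k <= #|W|)%N := S_core i iS.
(* an ordered choice of k vertices of W, permuted in all k! ways *)
pose f0 m := enum_val (widen_ord W_k m).
have f0_inj : injective f0.
  by move=> m1 m2 /enum_val_inj /(congr1 val) /= e; apply: val_inj.
have f0W m : f0 m \in W by apply: enum_valP.
pose g (s : {perm 'I_k}) := [ffun m => f0 (s m)].
have g_inj : injective g.
  move=> s1 s2 e; apply/permP => m.
  by apply: f0_inj; move/ffunP: e => /(_ m); rewrite !ffunE.
have g_i s : kneighbours i (g s).
  apply/and3P; split.
  - by apply/injectiveP => m1 m2; rewrite !ffunE => /f0_inj; exact: perm_inj.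
  - apply/codomP => [[m]]; rewrite ffunE => e.
    by have := f0W (s m); rewrite -e !inE adj_irr.
  - by apply/forallP => m; have := f0W (s m); rewrite ffunE !inE => /andP [].
have F_ge0 (f : {ffun 'I_k -> V}) : 0 <= \prod_(j < k) x (f j) by apply: prodr_ge0.
have := ler_sum_injective (P := kneighbours i) g_inj g_i F_ge0.
have -> : \sum_(s : {perm 'I_k}) \prod_(j < k) x (g s j) = \sum_(s : {perm 'I_k}) 1.
  apply: eq_bigr => s _; apply: big1 => j _.
  by rewrite ffunE /x; have := f0W (s j); rewrite inE => /andP [_ ->].
by rewrite sumr_const card_Sn.
Qed.

End KAdjacencySum.

Section MaximalSubeigenvalue.
Variables (R : realType) (V : finType) (adj : rel V) (k : nat).
Hypothesis k_gt0 : (0 < k)%N.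

Local Notation kadj_sum := (@kadj_sum R V adj k).
Local Notation subeigen := (@subeigen R V adj k).
Local Notation N := (#|{ffun 'I_k -> V}|%:R : R).

Definition unit_subeigen (mu : R) (x : V -> R) : Prop :=
  subeigen mu x /\ forall i, x i <= 1.

Definition maxsub (mu : R) (i : V) : R := sup [set x i | x in unit_subeigen mu]%classic.

Lemma unit_subeigen0 mu : unit_subeigen mu (fun _ => 0).
Proof. by split => [|i]; [apply: subeigen0 | exact: ler01]. Qed.

Lemma maxsub_has_sup mu i : has_sup [set x i | x in unit_subeigen mu]%classic.
Proof.
split; first by exists 0, (fun _ => 0) => //; exact: unit_subeigen0.
by exists 1 => _ [x [_ x_le1] <-].
Qed.

Lemma le_maxsub mu x i : unit_subeigen mu x -> x i <= maxsub mu i.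
Proof. by move=> ux; apply: ub_le_sup; [case: (maxsub_has_sup mu i) | exists x]. Qed.

Lemma maxsub_ge0 mu i : 0 <= maxsub mu i.
Proof. exact: (le_maxsub i (unit_subeigen0 mu)). Qed.

Lemma maxsub_le1 mu i : maxsub mu i <= 1.
Proof. by apply: ge_sup; [case: (maxsub_has_sup mu i) | move=> _ [x [_ x_le1] <-]]. Qed.

(* closed under pointwise suprema: x <= maxsub gives mu x_i^k <= A (maxsub) at i,
   and x_i can be taken arbitrarily close to maxsub mu i *)
Lemma maxsub_unit_subeigen mu : 0 <= mu -> unit_subeigen mu (maxsub mu).
Proof.
move=> mu_ge0; split => [i|]; last exact: maxsub_le1.
split; first exact: maxsub_ge0.
rewrite leNgt; apply/negP => lt_A.
pose g := mu * maxsub mu i ^+ k - kadj_sum (maxsub mu) i.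
have g_gt0 : 0 < g by rewrite subr_gt0.
have C_gt0 : 0 < mu * k%:R + 1 by apply: ltr_wpDl; rewrite ?mulr_ge0 ?ler0n.
pose eps := g / (mu * k%:R + 1).
have eps_gt0 : 0 < eps by apply: divr_gt0.
have eps_C : eps * (mu * k%:R + 1) = g by rewrite divfK // lt0r_neq0.
have [_ [x ux <-] lt_x] := sup_adherent eps_gt0 (maxsub_has_sup mu i).
have le_x m : 0 <= x m <= maxsub mu m.
  by case: (ux) => sx _; rewrite le_maxsub // andbT; case: (sx m).
have A_x : mu * x i ^+ k <= kadj_sum (maxsub mu) i.
  by case: ux => sx _; case: (sx i) => _ /le_trans; apply; apply: ler_kadj_sum.
have pow_x : maxsub mu i ^+ k - x i ^+ k <= k%:R * eps.
  have := @subrXX_le _ k (x i) (maxsub mu i) 1 eps (lexx 1) (ltW eps_gt0).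
  rewrite expr1n mulr1; apply; rewrite ?maxsub_le1 //; case/andP: (le_x i) => //.
  by rewrite /maxsub; lra.
have : mu * (maxsub mu i ^+ k - x i ^+ k) <= mu * (k%:R * eps) by apply: ler_wpM2l.
rewrite /g in eps_C; nra.
Qed.

Lemma maxsub_le mu mu' i : 0 <= mu -> mu <= mu' -> maxsub mu' i <= maxsub mu i.
Proof.
move=> mu_ge0 le_mu; apply: ge_sup; first by case: (maxsub_has_sup mu' i).
move=> _ [x [sx x_le1] <-]; apply: le_maxsub; split => // m.
case: (sx m) => x_ge0 le_A; split => //; apply: le_trans le_A.
by apply: ler_wpM2r => //; exact: exprn_ge0.
Qed.

Lemma maxsub_eq1 mu x : subeigen mu x -> nonzero x -> exists i, maxsub mu i = 1.
Proof.
move=> sx [i1 xi1]; have x_ge0 := subeigen_ge0 sx.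
have [j _ max_j] := @arg_maxP _ R V i1 xpredT x isT.
have xj_gt0 : 0 < x j by apply: lt_le_trans (max_j i1 isT); rewrite lt0r xi1 x_ge0.
pose y m := (x j)^-1 * x m.
have uy : unit_subeigen mu y.
  split=> m; last by rewrite /y mulrC ler_pdivrMr // mul1r; apply: max_j.
  split; first by rewrite mulr_ge0 // invr_ge0 ltW.
  rewrite /y kadj_sumZ exprMn mulrCA; apply: ler_wpM2l; last by case: (sx m).
  by rewrite exprn_ge0 // invr_ge0 ltW.
exists j; apply: le_anti; rewrite maxsub_le1 /=.
by have := le_maxsub j uy; rewrite /y mulVf // lt0r_neq0.
Qed.

Definition maxsub_lim (c0 ms : R) (i : V) : R :=
  inf [set maxsub mu i | mu in [set mu | c0 <= mu < ms]]%classic.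

Lemma maxsub_lim_has_inf c0 ms i : c0 < ms ->
  has_inf [set maxsub mu i | mu in [set mu | c0 <= mu < ms]]%classic.
Proof.
move=> c0_lt; split; first by exists (maxsub c0 i), c0; rewrite //= lexx c0_lt.
by exists 0 => _ [mu _ <-]; exact: maxsub_ge0.
Qed.

Lemma maxsub_lim_le c0 ms mu i : c0 <= mu < ms -> maxsub_lim c0 ms i <= maxsub mu i.
Proof.
move=> mu_in; have c0_lt : c0 < ms by case/andP: mu_in; apply: le_lt_trans.
by apply: ge_inf; [case: (maxsub_lim_has_inf i c0_lt) | exists mu].
Qed.

Lemma maxsub_lim_ge0 c0 ms i : c0 < ms -> 0 <= maxsub_lim c0 ms i.
Proof.
move=> c0_lt; apply: lb_le_inf; first by case: (maxsub_lim_has_inf i c0_lt).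
by move=> _ [mu _ <-]; exact: maxsub_ge0.
Qed.

Lemma maxsub_lim_approx c0 ms eps : 0 <= c0 -> c0 < ms -> 0 < eps -> exists2 d, 0 < d &
  forall i mu, c0 <= mu -> ms - d <= mu -> maxsub mu i <= maxsub_lim c0 ms i + eps.
Proof.
move=> c0_ge0 c0_lt eps_gt0; apply: exists_uniform_delta => i.
have [_ [mu_i /andP [c0_mu lt_mu] <-] lt_i] := inf_adherent eps_gt0 (maxsub_lim_has_inf i c0_lt).
exists (ms - mu_i) => [|e _ le_e mu c0_mu' le_mu]; first by rewrite subr_gt0.
apply: le_trans (ltW lt_i); apply: maxsub_le; lra.
Qed.

(* pass to the limit in mu z^[k] <= A z^k for z = maxsub mu, A being Lipschitz on [0, 1]^V *)
Lemma maxsub_lim_subeigen c0 ms : 0 <= c0 -> c0 < ms -> subeigen ms (maxsub_lim c0 ms).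
Proof.
move=> c0_ge0 c0_lt j; split; first exact: maxsub_lim_ge0.
apply/ler_addgt0Pr => e e_gt0; set w := maxsub_lim c0 ms.
have N_ge0 : 0 <= N by apply: ler0n.
have k_ge0 : 0 <= (k%:R : R) by apply: ler0n.
have C_gt0 : 0 < N * k%:R + 1 by apply: ltr_wpDl => //; apply: mulr_ge0.
pose eps := e / (N * k%:R + 1).
have eps_gt0 : 0 < eps by apply: divr_gt0.
have eps_C : eps * (N * k%:R + 1) = e by rewrite divfK // lt0r_neq0.
have [d d_gt0 approx] := maxsub_lim_approx c0_ge0 c0_lt eps_gt0.
pose del := Num.min d (Num.min eps (ms - c0)).
have [del_d del_eps del_c0] : [/\ del <= d, del <= eps & del <= ms - c0].
  by rewrite /del !ge_min !lexx !orbT.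
have del_gt0 : 0 < del by rewrite /del !lt_min d_gt0 eps_gt0 subr_gt0 c0_lt.
pose mu := ms - del; pose z := maxsub mu.
have c0_mu : c0 <= mu by rewrite /mu; lra.
have mu_lt : mu < ms by rewrite /mu; lra.
have [sz z_le1] := maxsub_unit_subeigen (le_trans c0_ge0 c0_mu).
have w_z i : [/\ 0 <= w i, w i <= z i, z i <= 1 & z i - w i <= eps].
  split; [exact: maxsub_lim_ge0 | by apply: maxsub_lim_le; rewrite c0_mu mu_lt | exact: z_le1 |].
  by have := approx i mu c0_mu; rewrite /z /w /mu; lra.
have lip := kadj_sum_sub_le adj k j (ltW eps_gt0) w_z.
have A_z : mu * z j ^+ k <= kadj_sum z j by case: (sz j).
have [w_ge0 le_wz z_le1' _] := w_z j.
have pw : w j ^+ k <= z j ^+ k by apply: lerXn2r; rewrite ?nnegrE // (le_trans w_ge0).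
have pw1 : w j ^+ k <= 1 by apply: exprn_ile1 => //; apply: le_trans le_wz z_le1'.
have pw0 : 0 <= w j ^+ k by apply: exprn_ge0.
have : del * w j ^+ k <= eps by nra.
have : mu * w j ^+ k <= mu * z j ^+ k by apply: ler_wpM2l => //; lra.
have -> : ms = mu + del by rewrite /mu subrK.
nra.
Qed.

Lemma exists_maxsub_eq1 c0 ms : 0 <= c0 ->
  (forall d, 0 < d -> exists2 mu, ms - d < mu & exists x, subeigen mu x /\ nonzero x) ->
  exists i0, forall mu, c0 <= mu < ms -> maxsub mu i0 = 1.
Proof.
move=> c0_ge0 near_ms; apply: contrapT => no_i0.
have below i : exists2 mu, c0 <= mu < ms & maxsub mu i < 1.
  have /existsNP [mu /not_implyP [mu_in ne1]] := (forallNP _).2 no_i0 i.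
  by exists mu => //; rewrite lt_neqAle maxsub_le1 andbT; apply/eqP.
have [d d_gt0 delta] : exists2 d, 0 < d &
    forall i, exists2 mu, c0 <= mu /\ mu + d <= ms & maxsub mu i < 1.
  apply: exists_uniform_delta => i; have [mu /andP [c0_mu lt_mu] lt1] := below i.
  exists (ms - mu) => [|e _ le_e]; first by rewrite subr_gt0.
  by exists mu => //; split => //; lra.
have [mu lt_mu [x [sx nzx]]] := near_ms d d_gt0.
have [i mu_i1] := maxsub_eq1 sx nzx.
have [mu_i [c0_mu_i le_mu_i] lt1] := delta i.
have le_mu : mu_i <= mu by lra.
by have := maxsub_le i (le_trans c0_ge0 c0_mu_i) le_mu; rewrite mu_i1; lra.
Qed.

Lemma exists_maximal_subeigen c0 : 0 < c0 -> (exists x, subeigen c0 x /\ nonzero x) ->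
  exists mu, [/\ c0 <= mu, exists x, subeigen mu x /\ nonzero x &
    forall mu' x, mu < mu' -> subeigen mu' x -> ~ nonzero x].
Proof.
move=> c0_gt0 sx0.
pose L := [set mu | c0 <= mu /\ exists x, subeigen mu x /\ nonzero x]%classic.
have L_ub : ubound L N by move=> mu [_ [x [sx nzx]]]; exact: subeigen_le_card sx nzx.
have L_sup : has_sup L by split; [exists c0 | exists N].
have c0_ms : c0 <= sup L by apply: ub_le_sup; [exists N | split].
exists (sup L); split => //; last first.
  move=> mu' x lt_mu sx nzx; have : L mu' by split; [lra | exists x].
  by move/(ub_le_sup (ex_intro _ N L_ub)); lra.
have [->|ms_neq] := eqVneq (sup L) c0; first exact: sx0.
have c0_lt : c0 < sup L by rewrite lt_neqAle eq_sym ms_neq c0_ms.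
have [i0 maxsub_i0] : exists i0, forall mu, c0 <= mu < sup L -> maxsub mu i0 = 1.
  apply: exists_maxsub_eq1 (ltW c0_gt0) _ => d d_gt0.
  by have [mu [_ sx] lt_mu] := sup_adherent d_gt0 L_sup; exists mu.
exists (maxsub_lim c0 (sup L)); split; first exact: maxsub_lim_subeigen (ltW c0_gt0) c0_lt.
have w_ge1 : 1 <= maxsub_lim c0 (sup L) i0.
  apply: lb_le_inf; first by case: (maxsub_lim_has_inf i0 c0_lt).
  by move=> _ [mu mu_in <-]; rewrite maxsub_i0.
by exists i0; apply: lt0r_neq0; apply: lt_le_trans w_ge1.
Qed.

End MaximalSubeigenvalue.

Section Eigenvalues.
Variables (R : rcfType) (V : finType) (adj : rel V) (k : nat).
Local Open Scope complex_scope.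

Local Notation N := (#|{ffun 'I_k -> V}|%:R : R).

Lemma kadj_apply_real (x : V -> R) i :
  kadj_apply adj k (fun j => (x j)%:C) i = ((k`!%:R)^-1 * kadj_sum adj k x i)%:C.
Proof.
rewrite /kadj_apply rmorphM fmorphV rmorph_nat rmorph_sum mulr_sumr.
rewrite [RHS]big_mkcond /=; apply: eq_bigr => f _.
rewrite /kadj_entry -/(kneighbours adj i f) rmorph_prod.
by case: (kneighbours adj i f); rewrite ?mul0r.
Qed.

Lemma kadj_eigenvalue_norm_le (l : R[i]) : kadj_eigenvalue adj k l ->
  Num.sqrt (complex.Re l ^+ 2 + complex.Im l ^+ 2) <= N.
Proof.
move=> [x [[i1 xi1] eig_x]].
pose nu i := Num.sqrt (complex.Re (x i) ^+ 2 + complex.Im (x i) ^+ 2).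
have [j _ max_j] := @arg_maxP _ R V i1 xpredT nu isT.
have le_xj i : `|x i| <= `|x j| by rewrite !normc_def lecR; apply: max_j.
have xjk_gt0 : 0 < `|x j| ^+ k by rewrite exprn_gt0 // (lt_le_trans _ (le_xj i1)) ?normr_gt0.
suff : `|l| <= N%:C by rewrite normc_def lecR.
rewrite -(ler_pM2r xjk_gt0) -normrX -normrM -eig_x /kadj_apply normrX.
apply: le_trans (ler_norm_sum _ _ _) _.
have -> : N%:C * `|x j| ^+ k = \sum_(f : {ffun 'I_k -> V}) `|x j| ^+ k.
  by rewrite sumr_const rmorph_nat mulr_natl.
apply: ler_sum => f _.
rewrite normrM normr_prod -[`|x j| ^+ k]mul1r; apply: ler_pM; rewrite ?prodr_ge0 //.
- rewrite /kadj_entry; case: ifP => _; last by rewrite normr0 ler01.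
  rewrite normfV ger0_norm ?ler0n // invr_le1 ?ler1n ?ltr0n ?fact_gt0 //.
  by rewrite unitfE pnatr_eq0 -lt0n fact_gt0.
- by rewrite -[k in _ ^+ k]card_ord -prodr_const; apply: ler_prod => m _; rewrite normr_ge0 le_xj.
Qed.

Lemma kcore_of_kadj_eigenvalue (l : R[i]) :
  kadj_eigenvalue adj k l -> l != 0 -> has_kcore adj k.
Proof.
move=> [x [[i1 xi1] eig_x]] l_neq0.
exists [set i | x i != 0]; split; first by apply/set0Pn; exists i1; rewrite inE.
move=> i; rewrite inE => xi.
have A_neq0 : kadj_apply adj k x i != 0 by rewrite eig_x mulf_neq0 // expf_neq0.
have [f [f_i xf]] : exists f, kneighbours adj i f /\ \prod_(j < k) x (f j) != 0.
  apply: contrapT => no_f; move/eqP: A_neq0; apply; apply: big1 => f _.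
  rewrite /kadj_entry -/(kneighbours adj i f); case: ifPn => f_i; last by rewrite mul0r.
  have [-> |xf] := eqVneq (\prod_(j < k) x (f j)) 0; first by rewrite mulr0.
  by case: no_f; exists f.
have f_inj : injective f by case/and3P: f_i => /injectiveP.
rewrite -[k in (k <= _)%N]card_ord -(card_imset (mem 'I_k) f_inj).
apply: subset_leq_card; apply/fintype.subsetP => _ /imsetP [m _ ->].
by rewrite !inE kneighbours_adj //=; move/prodf_neq0: xf => /(_ m isT).
Qed.

End Eigenvalues.

Section SpectralRadius.
Variables (R : realType) (V : finType) (adj : rel V) (k : nat).
Hypotheses (adj_sym : symmetric adj) (adj_irr : irreflexive adj) (k_gt0 : (0 < k)%N).
Local Open Scope complex_scope.

Lemma rho_k_ge1 : has_kcore adj k -> 1 <= rho_k R adj k.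
Proof.
move=> [S [S_ne S_core]].
have fact_gt0 : 0 < (k`!%:R : R) by rewrite ltr0n fact_gt0.
have S_sub : exists x : V -> R, subeigen adj k k`!%:R x /\ nonzero x.
  have /set0Pn [i0 i0S] := S_ne.
  exists (fun i => if i \in S then 1 else 0); split; first exact: kcore_subeigen.
  by exists i0; rewrite i0S oner_neq0.
have [mu [le_mu mu_sub maximal]] := exists_maximal_subeigen k_gt0 fact_gt0 S_sub.
have [x [[i xi] eig_x]] :=
  eigen_of_maximal adj_sym adj_irr k_gt0 (lt_le_trans fact_gt0 le_mu) mu_sub maximal.
pose l := (k`!%:R)^-1 * mu.
have l_ge1 : 1 <= l by rewrite /l mulrC ler_pdivlMr // mul1r.
have l_eig : kadj_eigenvalue adj k l%:C.
  exists (fun j => (x j)%:C); split; first by exists i; rewrite fmorph_eq0.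
  by move=> j; rewrite kadj_apply_real eig_x /l -rmorphXn -rmorphM mulrA.
apply: (le_trans l_ge1); apply: ub_le_sup.
  by exists #|{ffun 'I_k -> V}|%:R => _ [l' l'_eig <-]; exact: (kadj_eigenvalue_norm_le l'_eig).
by exists l%:C => //=; rewrite expr0n addr0 sqrtr_sqr ger0_norm //; lra.
Qed.

Lemma kcore_of_rho_k_gt0 : 0 < rho_k R adj k -> has_kcore adj k.
Proof.
move=> rho_gt0; apply: contrapT => no_core.
suff : rho_k R adj k <= 0 by lra.
rewrite /rho_k; set E := (X in sup X).
have E0 r : E r -> r = 0.
  case=> l l_eig <-; have -> : l = 0.
    by apply: contrapT => /eqP l_neq0; exact: no_core (kcore_of_kadj_eigenvalue l_eig l_neq0).
  by rewrite /= expr0n addr0 sqrtr0.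
have [[r Er]|E_empty] := pselect (exists r, E r).
  by apply: ge_sup => [|s /E0 ->]; first exists r.
by rewrite sup_out // => [[[r Er] _]]; apply: E_empty; exists r.
Qed.

End SpectralRadius.

Theorem theorem3p1 (R : realType) (V : finType) (adj : rel V) (k : nat) :
  simple_graph adj -> (1 <= k)%N ->
  (has_kcore adj k <-> 1 <= @rho_k R V adj k).
Proof.
move=> [adj_sym adj_irr] k_gt0; split; first exact: rho_k_ge1.
by move=> rho_ge1; apply: kcore_of_rho_k_gt0; lra.
Qed.
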